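(* Let $L/L^G$ be a Galois extension of number fields with Galois group $G$, and let $w_L$ be the order of the group $\mu(L)$ of roots of unity in $L$. Fix a prime $p\mid w_L$ and let $S_p$ be the set of subgroups $H\le G$ with $p\nmid|H|$. For $H\le G$ let $\nu(H,p)$ be the $p$-adic valuation of the order $w_{L^H}$ of the group of roots of unity of the fixed field $L^H$. If $(n_H)_{H\in S_p}$ are integers with $\sum_{H\in S_p}n_H\varepsilon_H=0$ in $\mathbb{Q}[G]$, then $\sum_{H\in S_p}n_H\nu(H,p)=0$.
   Context: $\varepsilon_H=\frac1{|H|}\sum_{h\in H}h$ is the norm idempotent of $H$. *)

From mathcomp Require Import all_boot all_order all_algebra all_fingroup all_solvable all_field.
Set Implicit Arguments. Unset Strict Implicit. Unset Printing Implicit Defensive.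
Import GRing.Theory.
Local Open Scope ring_scope.

(* Number fields are realised as subfields of an ambient field L which is a
   finite (splitting) extension of rat. *)

Definition is_root_of_unity (F : fieldType) (x : F) : Prop :=
  exists n : nat, (0 < n)%N /\ x ^+ n = 1.

Definition mu_order (K : fieldType) (L : fieldExtType K) (E : {vspace L})
    (w : nat) : Prop :=
  exists s : seq L, [/\ uniq s,
    (forall x : L, x \in s <-> (x \in E /\ is_root_of_unity x)) &
    size s = w].

(* The norm idempotent eps_H = 1/|H| sum_{h in H} h of the group algebra
   Q[G], an element of Q[G] being represented by its coefficient function
   gT -> rat (supported in G). *)
Definition norm_idem (gT : finGroupType) (H : {set gT}) : {ffun gT -> rat} :=
  [ffun g => (g \in H)%:R / (#|H|)%:R].

(* Fix a primitive p-th root of unity zeta in L and let p^a be the exact power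
   of p dividing w_L.  For a subgroup H of order prime to p, the fixed field
   L^H contains zeta if and only if it contains all p^a-th roots of unity: an
   automorphism h fixing zeta sends a primitive p^a-th root z to z^i with
   i = 1 mod p, so h^(p^(a-1)) fixes z; as the order of h is prime to p, h
   is a power of h^(p^(a-1)).  Hence nu(H, p) = a [zeta \in L^H].
   The cyclotomic character of G, composed with an embedding of F_p^* into
   C^*, is a linear character lambda whose kernel is the stabiliser of zeta.
   Extending lambda linearly to Q[G] gives lambda(eps_H) = [H <= ker lambda]
   = [zeta \in L^H], so applying it to the relation yields
   sum n_H [zeta \in L^H] = 0, and the claim follows after scaling by a. *)

From HB Require Import structures.
From mathcomp Require Import all_boot all_order all_algebra all_fingroup all_solvable all_field.
Set Implicit Arguments. Unset Strict Implicit. Unset Printing Implicit Defensive.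
Import GRing.Theory Num.Theory.
Local Open Scope ring_scope.

(* [y ^+ p - 1 = (y - 1) * \sum_(i < p) y ^+ i], and the sum is [p] mod [p]. *)
Lemma exprz_congr1 (p : nat) (q y : int) :
  (p %| q)%Z -> (y == 1 %[mod q])%Z -> (y ^+ p == 1 %[mod q * p])%Z.
Proof.
rewrite !eqz_mod_dvd => p_q q_y1; have p_y1 : (p %| y - 1)%Z := dvdz_trans p_q q_y1.
rewrite -[X in _ - X](expr1n _ p) subrXX; apply: dvdz_mul => //.
rewrite (eq_bigr (fun i : 'I_p => (y ^+ (p.-1 - i) - 1) + 1)); last first.
  by move=> i _; rewrite expr1n mulr1 subrK.
rewrite big_split /= sumr_const card_ord natz.
apply: rpredD (dvdzz _); apply: rpred_sum => i _.
by rewrite -[X in _ - X](expr1n _ (p.-1 - i)) subrXX dvdz_mulr.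
Qed.

Lemma expn_pfactor_congr1 (p b x : nat) : prime p ->
  (x = 1 %[mod p])%N -> (x ^ (p ^ b) = 1 %[mod p ^ b.+1])%N.
Proof.
move=> p_pr /eqP x1; apply/eqP; rewrite -!(eqz_nat (_ %% _)) -!modz_nat in x1 *.
elim: b => [|b IHb]; first by rewrite expn1.
rewrite expnSr expnM -natz natrX natz [(p ^ b.+2)%N]expnSr PoszM.
by apply: exprz_congr1 => //; rewrite dvdzE dvdn_exp.
Qed.

Lemma root_of_unityM (F : fieldType) (x y : F) :
  is_root_of_unity x -> is_root_of_unity y -> is_root_of_unity (x * y).
Proof.
move=> [m [m_gt0 xm]] [n [n_gt0 yn]]; exists (m * n)%N.
split; first by rewrite muln_gt0 m_gt0.
by rewrite exprMn exprM xm [(m * n)%N]mulnC exprM yn !expr1n mulr1.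
Qed.

Lemma root_of_unity_neq0 (F : fieldType) (x : F) : is_root_of_unity x -> x != 0.
Proof.
move=> [n [n_gt0 xn]]; apply: contra_eq_neq xn => ->.
by rewrite expr0n gtn_eqF // eq_sym oner_eq0.
Qed.

Lemma root_of_unity_prim (F : fieldType) n (z : F) :
  n.-primitive_root z -> is_root_of_unity z.
Proof.
by move=> pz; exists n; split; rewrite ?(prim_order_gt0 pz) ?prim_expr_order.
Qed.

Lemma memv_unity_root (F : fieldType) (L : fieldExtType F) (V : {subfield L}) n x y :
  x \in V -> n.-primitive_root x -> y ^+ n = 1 -> y \in V.
Proof. by move=> xV px /(prim_rootP px)[i ->]; rewrite rpredX. Qed.

Section MuOrder.

Variables (F : fieldType) (L : fieldExtType F) (V : {subfield L}) (w : nat).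
Hypothesis muVw : mu_order V w.

(* Multiplication by [x] permutes the [w] roots of unity of [V], so their
   product [P] satisfies [P = x ^+ w * P]. *)
Lemma mu_order_expr x : x \in V -> is_root_of_unity x -> x ^+ w = 1.
Proof.
case: muVw => s [uniq_s mem_s size_s] xV ux.
have x_neq0 := root_of_unity_neq0 ux.
have uniq_xs : uniq [seq x * y | y <- s] by rewrite map_inj_uniq //; apply: mulfI.
have sub_xs : {subset [seq x * y | y <- s] <= s}.
  move=> _ /mapP[y /mem_s[yV uy] ->]; apply/mem_s.
  by split; [rewrite rpredM | apply: root_of_unityM].
have [|_ eq_xs] := uniq_min_size uniq_xs sub_xs; first by rewrite size_map.
have prod_neq0 : \prod_(y <- s) y != 0.
  by rewrite prodf_seq_neq0; apply/allP => y /mem_s[_ /root_of_unity_neq0].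
apply: (mulIf prod_neq0); rewrite mul1r.
rewrite -{2}(perm_big _ (uniq_perm uniq_xs uniq_s eq_xs)) big_map big_split /=.
by rewrite big_const_seq count_predT iter_mulr_1 size_s.
Qed.

Lemma mu_order_gt0 : (0 < w)%N.
Proof.
case: muVw => s [_ mem_s <-].
have: 1 \in s by apply/mem_s; split; [apply: mem1v | exists 1%N; rewrite expr1n].
by case: s {mem_s}.
Qed.

Lemma mu_order_prim_root : exists2 z, z \in V & w.-primitive_root z.
Proof.
case: muVw => s [uniq_s mem_s size_s].
have: has w.-primitive_root s.
  apply: has_prim_root; rewrite ?mu_order_gt0 ?size_s //.
  by apply/allP => x /mem_s[xV ux]; rewrite unity_rootE mu_order_expr.
by case/hasP=> z /mem_s[zV _]; exists z.
Qed.

Lemma dvdn_mu_order n :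
  reflect (exists2 z, z \in V & n.-primitive_root z) (n %| w)%N.
Proof.
apply: (iffP idP) => [n_w | [z zV pz]].
  have [z zV pz] := mu_order_prim_root.
  by exists (z ^+ (w %/ n)); rewrite ?rpredX ?dvdn_prim_root.
by rewrite (prim_order_dvd pz) mu_order_expr //; apply: root_of_unity_prim pz.
Qed.

End MuOrder.

Lemma finField_unit_expr (F : finFieldType) (x : F) : x != 0 -> x ^+ #|F|.-1 = 1.
Proof.
move=> x_neq0; apply: (mulIf x_neq0).
by rewrite mul1r -exprSr prednK ?expf_card // (ltn_trans _ (finNzRing_gt1 F)).
Qed.

Lemma finField_prim_root (F : finFieldType) :
  exists R : F, (#|F|.-1).-primitive_root R.
Proof.
have: has (#|F|.-1).-primitive_root (enum (predC1 (0 : F))).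
  apply: has_prim_root; rewrite ?enum_uniq -?cardE ?cardC1 //.
    by rewrite -subn1 subn_gt0 finNzRing_gt1.
  by apply/allP => x; rewrite mem_enum unity_rootE => /finField_unit_expr ->.
by case/hasP=> R _ pR; exists R.
Qed.

(* [f] is the discrete logarithm to a generator of the cyclic group [F^*],
   followed by exponentiation of a primitive root of unity of the same order
   in [algC]; [f 0 = 0]. *)
Lemma finField_mul_embedding (F : finFieldType) :
  exists f : F -> algC, {morph f : x y / x * y} /\ forall x, (f x == 1) = (x == 1).
Proof.
have [R pR] := finField_prim_root F; set N := #|F|.-1 in pR.
have [z pz] := C_prim_root_exists (prim_order_gt0 pR).
have eq_expr i k : (z ^+ i == z ^+ k) = (R ^+ i == R ^+ k).
  by rewrite (eq_prim_root_expr pz) (eq_prim_root_expr pR).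
have /fin_all_exists[dlog dlogK] : forall x : F, exists j, x != 0 -> R ^+ j = x.
  move=> x; case: (eqVneq x 0) => [-> | x_neq0]; first by exists 0%N.
  by have [j ->] := prim_rootP pR (finField_unit_expr x_neq0); exists j.
exists (fun x => if x == 0 then 0 else z ^+ dlog x); split.
  move=> x y; rewrite mulf_eq0.
  have [->|x_neq0] := eqVneq x 0; first by rewrite /= mul0r.
  have [->|y_neq0] := eqVneq y 0; first by rewrite orbT mulr0.
  by apply/eqP; rewrite -exprD eq_expr exprD !dlogK ?mulf_neq0.
move=> x; have [->|x_neq0] := eqVneq x 0.
  by rewrite eq_sym oner_eq0 eq_sym oner_eq0.
by rewrite -[1 in LHS](expr0 z) eq_expr expr0 dlogK.
Qed.

Section PrimRootFpExponent.

Variables (R : nzRingType) (p : nat) (zeta : R).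
Hypotheses (p_pr : prime p) (pzeta : p.-primitive_root zeta).

Lemma expr_Fp_inj : injective (fun x : 'F_p => zeta ^+ x).
Proof.
have lt_Fp_p (x : 'F_p) : (x < p)%N by rewrite -[p in (_ < p)%N](Fp_cast p_pr).
by move=> x y /eqP; rewrite (eq_prim_root_expr pzeta) !modn_small // => /eqP/val_inj.
Qed.

Lemma expr_FpM (x y : 'F_p) : zeta ^+ (x * y)%R = zeta ^+ (x * y).
Proof.
rewrite -[in LHS](natr_Zp x) -[in LHS](natr_Zp y) -natrM.
by rewrite val_Fp_nat // prim_expr_mod.
Qed.

Lemma expr_Fp1 : zeta ^+ (1 : 'F_p)%R = zeta.
Proof.
by have := val_Fp_nat p_pr 1; rewrite mulr1n => ->; rewrite prim_expr_mod ?expr1.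
Qed.

End PrimRootFpExponent.

Section GaloisRootsOfUnity.

Variables (F : fieldType) (L : splittingFieldType F) (E : {subfield L}).

Lemma gal_expg_expr (g : gal_of E) x i k :
  x \in E -> g x = x ^+ i -> (g ^+ k)%g x = x ^+ (i ^ k).
Proof.
move=> xE gx; elim: k => [|k IHk]; first by rewrite expg0 gal_id expn0 expr1.
by rewrite expgSr galM // IHk rmorphXn /= gx -exprM expnS.
Qed.

Lemma gal_fixed_expg_coprime (g : gal_of E) x k :
  x \in E -> coprime #[g]%g k -> (g ^+ k)%g x = x -> g x = x.
Proof.
move=> xE co_g_k gkx.
have gen_gk : generator <[g]>%g (g ^+ k)%g by rewrite generator_coprime.
have /cycleP[m ->] : g \in <[g ^+ k]>%g by rewrite -(eqP gen_gk) cycle_id.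
by rewrite (gal_expg_expr m xE (_ : _ = x ^+ 1)) ?exp1n ?expr1.
Qed.

Lemma gal_unity_root_expr (g : gal_of E) n z :
  z \in E -> n.-primitive_root z -> exists i, g z = z ^+ i.
Proof.
move=> zE pz; have [|i ->] := prim_rootP pz (x := g z); last by exists i.
by rewrite -rmorphXn prim_expr_order // rmorph1.
Qed.

Lemma gal_fix_prim_root_ppower (p b : nat) (z : L) (g : gal_of E) :
  prime p -> z \in E -> (p ^ b.+1).-primitive_root z -> ~~ (p %| #[g]%g)%N ->
  g (z ^+ (p ^ b)) = z ^+ (p ^ b) -> g z = z.
Proof.
move=> p_pr zE pz p'g gzpb; have [i gz] := gal_unity_root_expr g zE pz.
have i1 : (i = 1 %[mod p])%N.
  move: gzpb; rewrite rmorphXn /= gz -exprM => /eqP.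
  rewrite -{2}(mul1n (p ^ b)%N) (eq_prim_root_expr pz) expnS -!muln_modl.
  by rewrite eqn_pmul2r ?expn_gt0 ?prime_gt0 // => /eqP.
apply: (gal_fixed_expg_coprime (k := p ^ b)) => //.
  by rewrite coprime_sym coprimeXl // prime_coprime.
rewrite (gal_expg_expr _ zE gz); apply/eqP.
by rewrite -{2}(expr1 z) (eq_prim_root_expr pz) expn_pfactor_congr1.
Qed.

Lemma gal_cyclotomic_char p zeta : prime p -> zeta \in E -> p.-primitive_root zeta ->
  exists chi : gal_of E -> 'F_p, forall g, (g : gal_of E) zeta = zeta ^+ chi g.
Proof.
move=> p_pr zetaE pzeta.
suff /fin_all_exists : forall g : gal_of E, exists x : 'F_p, g zeta = zeta ^+ x.
  by [].
move=> g; have [i gzeta] := gal_unity_root_expr g zetaE pzeta.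
by exists i%:R; rewrite val_Fp_nat // prim_expr_mod.
Qed.

Lemma gal_lin_char_fix p zeta : prime p -> zeta \in E -> p.-primitive_root zeta ->
  exists2 lam : gal_of E -> algC,
    {morph lam : g h / (g * h)%g >-> g * h} &
    forall g, (lam g == 1) = (g zeta == zeta).
Proof.
move=> p_pr zetaE pzeta; have [chi chiP] := gal_cyclotomic_char p_pr zetaE pzeta.
have [f [fM f1]] := finField_mul_embedding 'F_p.
exists (f \o chi) => [g h | g] /=.
  rewrite -fM; congr f; apply: (expr_Fp_inj p_pr pzeta).
  by rewrite /= expr_FpM // -chiP galM // chiP rmorphXn /= chiP -exprM mulnC.
by rewrite f1 -(inj_eq (expr_Fp_inj p_pr pzeta)) /= -chiP (expr_Fp1 p_pr pzeta).
Qed.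

End GaloisRootsOfUnity.

Section GroupAlgebraEvaluation.

Variables (gT : finGroupType) (C : numFieldType) (lam : gT -> C).

Definition eval_group_alg (f : {ffun gT -> rat}) : C := \sum_g ratr (f g) * lam g.

Fact eval_group_alg_is_zmod_morphism : zmod_morphism eval_group_alg.
Proof.
move=> f1 f2; rewrite /eval_group_alg -sumrB.
by apply: eq_bigr => g _; rewrite !ffunE rmorphB mulrBl.
Qed.

HB.instance Definition _ :=
  GRing.isZmodMorphism.Build _ _ eval_group_alg eval_group_alg_is_zmod_morphism.

Hypothesis lamM : {morph lam : x y / (x * y)%g >-> x * y}.

Lemma sum_lin_char (H : {group gT}) :
  \sum_(h in H) lam h = if H \subset [set g | lam g == 1] then #|H|%:R else 0.
Proof.
case: ifP => [/subsetP kerH | /negbT/subsetPn[h0 h0H]].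
  rewrite (eq_bigr (fun=> 1)) ?sumr_const // => h /kerH.
  by rewrite inE => /eqP.
rewrite inE => lam_h0_neq1; set S := \sum_(h in H) lam h.
have S_lamS : S = lam h0 * S.
  rewrite /S mulr_sumr (reindex_inj (mulgI h0)) /=.
  by apply: eq_big => [h | h _]; rewrite ?groupMl ?lamM.
apply/eqP; move: S_lamS => /eqP; rewrite -subr_eq0 -{1}(mul1r S) -mulrBl mulf_eq0.
by rewrite subr_eq0 eq_sym (negbTE lam_h0_neq1).
Qed.

Lemma eval_norm_idem (H : {group gT}) :
  eval_group_alg (norm_idem H) = (H \subset [set g | lam g == 1])%:R.
Proof.
rewrite /eval_group_alg (bigID [in H]) /= [X in _ + X]big1 ?addr0; last first.
  by move=> g /negbTE gH; rewrite ffunE gH mul0r rmorph0 mul0r.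
under eq_bigr => g gH do rewrite ffunE gH mulr1n div1r fmorphV rmorph_nat.
rewrite -mulr_sumr sum_lin_char; case: ifP => _; rewrite ?mulr0 // mulVf //.
by rewrite pnatr_eq0 -lt0n cardG_gt0.
Qed.

Lemma norm_idem_rel_ker (I : Type) (r : seq I) (P : pred I) (H : I -> {group gT})
    (n : I -> int) :
  \sum_(i <- r | P i) norm_idem (H i) *~ n i = 0 ->
  \sum_(i <- r | P i) n i * (H i \subset [set g | lam g == 1])%:Z = 0.
Proof.
move=> /(congr1 eval_group_alg); rewrite raddf_sum raddf0 => eval_rel.
apply/eqP; rewrite -(intr_eq0 C) rmorph_sum; apply/eqP.
rewrite -[RHS]eval_rel; apply: eq_bigr => i _.
by rewrite raddfMz /= eval_norm_idem intrM -[RHS]mulrzl.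
Qed.

End GroupAlgebraEvaluation.

Section FixedFieldRootsOfUnity.

Variables (F : fieldType) (L : splittingFieldType F) (E : {subfield L}).
Variables (p w1 : nat) (zeta : L).
Hypotheses (p_pr : prime p) (pzeta : p.-primitive_root zeta).
Hypothesis mu1 : mu_order (fixedField (1%G : {group gal_of E})) w1.
Hypothesis p_w1 : (p %| w1)%N.

Lemma logn_mu_order_fixedField (H : {group gal_of E}) wH :
  ~~ (p %| #|H|)%N -> mu_order (fixedField H) wH ->
  logn p wH = ((zeta \in fixedField H) * logn p w1)%N.
Proof.
move=> p'H muH; have wH_gt0 := mu_order_gt0 muH; have w1_gt0 := mu_order_gt0 mu1.
have [zetaH | zeta'H] := boolP (zeta \in fixedField H); last first.
  rewrite mul0n logn_coprime // prime_coprime //.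
  apply: contra zeta'H => /(dvdn_mu_order muH)[x xH px].
  exact: memv_unity_root xH px (prim_expr_order pzeta).
set a := logn p w1.
have a_gt0 : (0 < a)%N by rewrite logn_gt0 mem_primes p_pr w1_gt0.
rewrite mul1n; apply/eqP; rewrite eqn_leq; apply/andP; split.
  apply: dvdn_leq_log w1_gt0 _; apply/(dvdn_mu_order mu1).
  have [z zH pz] := mu_order_prim_root muH; exists z => //.
  exact: subvP (fixedFieldS (sub1G H)) _ zH.
rewrite -(pfactor_dvdn _ p_pr wH_gt0); apply/(dvdn_mu_order muH).
have /(dvdn_mu_order mu1)[z z1 pz] := pfactor_dvdnn p w1.
exists z => //; have zE := (mem_fixedFieldP z1).1.
apply/fixedFieldP => // h hH; rewrite -/a -(prednK a_gt0) in pz.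
apply: (gal_fix_prim_root_ppower p_pr zE pz).
  by apply: contra p'H => /dvdn_trans; apply; apply: order_dvdG.
have: z ^+ (p ^ a.-1) \in fixedField H.
  apply: (memv_unity_root zetaH pzeta).
  by rewrite -exprM -expnSr (prim_expr_order pz).
by case/mem_fixedFieldP => _; apply.
Qed.

End FixedFieldRootsOfUnity.

Theorem proposition3p7
  (L : splittingFieldType rat) (K E : {subfield L})
  (galEK : galois K E)
  (w : {group gal_of E} -> nat)
  (hw : forall H : {group gal_of E}, H \subset 'Gal(E / K)%g ->
          mu_order (fixedField H) (w H))
  (p : nat) (pp : prime p) (pw : (p %| w 1%G)%N)
  (n : {group gal_of E} -> int)
  (hn : \sum_(H : {group gal_of E} | (H \subset 'Gal(E / K)%g) && ~~ (p %| #|H|)%N)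
          norm_idem H *~ n H = 0) :
  \sum_(H : {group gal_of E} | (H \subset 'Gal(E / K)%g) && ~~ (p %| #|H|)%N)
     n H * (logn p (w H))%:Z = 0.
Proof.
have mu1 := hw 1%G (sub1G _).
have /(dvdn_mu_order mu1)[zeta zeta1 pzeta] := pw.
have zetaE := (mem_fixedFieldP zeta1).1.
have [lam lamM lam_eq1] := gal_lin_char_fix pp zetaE pzeta.
have ker_lam (H : {group gal_of E}) :
    (H \subset [set g | lam g == 1]) = (zeta \in fixedField H).
  apply/subsetP/(fixedFieldP zetaE) => [kerH g /kerH | fixH g /fixH].
    by rewrite inE lam_eq1 => /eqP.
  by rewrite inE lam_eq1 => ->.
have fixed_rel := norm_idem_rel_ker lamM hn.
under eq_bigr => H /andP[sHG p'H] do
  rewrite (logn_mu_order_fixedField pp pzeta mu1 pw p'H (hw H sHG))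
          PoszM mulrA -ker_lam.
by rewrite -mulr_suml fixed_rel mul0r.
Qed.
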